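(* Let $p$ be a prime and $M\in\mathrm{GL}(2,\mathbb{F}_p)$. Then $M$ is reversible within $\mathrm{GL}(2,\mathbb{F}_p)$ if and only if $M^2=\mathbb{1}$ or $\det(M)=1$. Whenever $M^2=\mathbb{1}$, one has $\mathcal{R}(M)=\mathcal{S}(M)$. If $\det(M)=1$ and $M^2\neq\mathbb{1}$, there exists an involutory reversor, and $\mathcal{R}(M)=\mathcal{S}(M)\rtimes C_2$.
   Context: $M$ is reversible within a group $\mathcal{G}$ if there is $G\in\mathcal{G}$ with $GMG^{-1}=M^{-1}$; such $G$ is a reversor. With $\mathcal{G}=\mathrm{GL}(2,\mathbb{F}_p)$: $\mathcal{S}(M)=\{G\in\mathcal{G}: GMG^{-1}=M\}$ (symmetry group) and $\mathcal{R}(M)=\{G\in\mathcal{G}: GMG^{-1}=M^{\pm1}\}$ (reversing symmetry group). $C_2$ is the cyclic group of order 2 (generated by an involutory reversor). *)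

From mathcomp Require Import all_boot all_order all_algebra all_fingroup all_solvable.
Set Implicit Arguments. Unset Strict Implicit. Unset Printing Implicit Defensive.
Import GroupScope.

Definition reversor {gT : finGroupType} (M G : gT) : Prop := G * M * G^-1 = M^-1.
Definition reversible {gT : finGroupType} (M : gT) : Prop := exists G : gT, reversor M G.

Definition symgrp {gT : finGroupType} (M : gT) : {set gT} :=
  [set G : gT | G * M * G^-1 == M].
Definition revsymgrp {gT : finGroupType} (M : gT) : {set gT} :=
  [set G : gT | (G * M * G^-1 == M) || (G * M * G^-1 == M^-1)].

(* Conjugation preserves determinant and trace, and for a 2x2 matrix
   [M^-1 = (tr M - M) / det M].  A reversor G of M therefore forces
   [det M = det M^-1], i.e. [det M = +-1], and [tr M = tr M / det M]; if
   [det M = -1] then [tr M = 0] and Cayley-Hamilton gives [M^2 = 1].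
   Conversely every M of determinant 1 admits an explicit involutory reversor:
   a triangular reflection if M is not diagonal, the coordinate swap if it is.
   Once an involutory reversor G of a non-involution M is known, R(M) is the
   union of the centraliser C(M) and its coset C(M) G, G normalises C(M)
   (it conjugates M to M^-1) and G is not in C(M), so
   R(M) = C(M) >< <[G]>. *)

From mathcomp Require Import all_boot all_order all_algebra all_fingroup all_solvable.
From mathcomp Require Import ring.
Set Implicit Arguments. Unset Strict Implicit. Unset Printing Implicit Defensive.
Import GroupScope.

Section Reversors.
Variables (gT : finGroupType) (M : gT).

Lemma mulgJV (H : gT) : H * M * H^-1 = M ^ H^-1.
Proof. by rewrite conjgE invgK mulgA. Qed.

Lemma reversor_mulP (G : gT) : reversor M G <-> M * G * M = G.
Proof.
rewrite /reversor; split=> [rev | MGM].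
  by rewrite -[G in RHS]mul1g -(mulgV M) -rev !mulgA mulgKV.
by rewrite -{2}MGM !invMg !mulgA mulgK mulgV mul1g.
Qed.

Lemma reversor_conjg (G : gT) : reversor M G -> M ^ G = M^-1.
Proof.
rewrite /reversor mulgJV => rev.
have MVJ : (M^-1) ^ G^-1 = M by rewrite conjVg rev invgK.
by rewrite -{1}MVJ -conjgM mulVg conjg1.
Qed.

Lemma cent1_conjg_fix (H : gT) : (H \in 'C[M]) = (M ^ H == M).
Proof.
apply/cent1P/eqP=> [/commute_sym/commgP/conjg_fixP // | /conjg_fixP/commgP].
exact: commute_sym.
Qed.

Lemma symgrpE : symgrp M = 'C[M].
Proof. by apply/setP=> H; rewrite inE mulgJV -cent1_conjg_fix groupV. Qed.

Lemma revsymgrp_involution : M ^+ 2 = 1 -> revsymgrp M = symgrp M.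
Proof.
move=> M2; have MV : M^-1 = M by apply/eqP; rewrite eq_invg_mul -expg2 M2.
by apply/setP=> H; rewrite !inE MV orbb.
Qed.

Lemma revsymgrp_reversor (G : gT) :
  reversor M G -> revsymgrp M = 'C[M] :|: 'C[M] :* G.
Proof.
move=> rev; apply/setP=> H; rewrite inE in_setU mem_rcoset !mulgJV.
congr (_ || _); first by rewrite -groupV cent1_conjg_fix.
rewrite -groupV invMg invgK cent1_conjg_fix conjgM (reversor_conjg rev).
by rewrite conjVg eqg_invLR.
Qed.

Lemma order_involutory_reversor (G : gT) :
  reversor M G -> G ^+ 2 = 1 -> M ^+ 2 != 1 -> #[G] = 2.
Proof.
move=> rev G2 M2.
have nG1 : G != 1.
  apply: contra M2 => /eqP G1; move: rev; rewrite G1 /reversor mul1g invg1 mulg1 => MV.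
  by rewrite expg2 {1}MV mulVg.
have o_dvd2 : #[G] %| 2 by rewrite order_dvdn G2.
by apply/eqP; rewrite eqn_leq dvdn_leq //= order_gt1.
Qed.

Lemma revsymgrp_sdprod (G : gT) :
  reversor M G -> G ^+ 2 = 1 -> M ^+ 2 != 1 -> symgrp M ><| <[G]> = revsymgrp M.
Proof.
move=> rev G2 M2; have oG := order_involutory_reversor rev G2 M2.
have GnC : G \notin 'C[M].
  rewrite cent1_conjg_fix (reversor_conjg rev); apply: contra M2 => /eqP MV.
  by rewrite expg2 -{1}MV mulVg.
rewrite symgrpE sdprodE.
- by rewrite /= cycle2g // mulgU rcoset1 (revsymgrp_reversor rev).
- rewrite /= cycle_subG; apply/normP.
  by rewrite -cent1J (reversor_conjg rev) -!cent_cycle cycleV.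
- by rewrite /= setIC prime_TIg ?cycle_subG // -orderE oG.
Qed.
End Reversors.

Section Matrix2.
Import GRing.Theory.
Local Open Scope ring_scope.

Variable F : fieldType.
Implicit Types A B M G : 'M[F]_2.

Local Notation i0 := (@ord0 1).
Local Notation i1 := (@ord_max 1).

Lemma ord2P (i : 'I_2) : i = i0 \/ i = i1.
Proof. by case: i => [[|[|//]] lt_i2]; [left | right]; apply: val_inj. Qed.

Lemma eq_mx2 A B : A i0 i0 = B i0 i0 -> A i0 i1 = B i0 i1 ->
  A i1 i0 = B i1 i0 -> A i1 i1 = B i1 i1 -> A = B.
Proof.
move=> e00 e01 e10 e11; apply/matrixP=> i j.
by case: (ord2P i) => ->; case: (ord2P j) => ->.
Qed.

Lemma mulmx2E A B i j : (A *m B) i j = A i i0 * B i0 j + A i i1 * B i1 j.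
Proof.
rewrite mxE !big_ord_recl big_ord0 addr0.
by congr (_ * _ + _ * _); congr (_ _ _); apply: val_inj.
Qed.

Lemma det_mx2 A : \det A = A i0 i0 * A i1 i1 - A i0 i1 * A i1 i0.
Proof.
rewrite (expand_det_row _ i0) !big_ord_recl big_ord0 addr0 /cofactor !det_mx11 !mxE /=.
have lift_i0 (k : 'I_1) : lift i0 k = i1 by apply: val_inj; case: k => [[]].
have lift_i1 (k : 'I_1) : lift i1 k = i0 by apply: val_inj; case: k => [[]].
by rewrite !lift_i0 !lift_i1 /=; ring.
Qed.

Lemma mxtrace_mx2 A : \tr A = A i0 i0 + A i1 i1.
Proof. by rewrite /mxtrace !big_ord_recl big_ord0 addr0; congr (_ + A _ _); apply: val_inj. Qed.

Lemma Cayley_Hamilton_mx2 A : A *m A = \tr A *: A - (\det A)%:M.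
Proof. by apply: eq_mx2; rewrite mulmx2E det_mx2 mxtrace_mx2 !mxE /=; ring. Qed.

Lemma invmx_mx2 A : A \in unitmx -> invmx A = (\det A)^-1 *: ((\tr A)%:M - A).
Proof.
move=> Au; have detA_neq0 : \det A != 0 by rewrite -unitfE -unitmxE.
rewrite -[RHS](mulKmx Au) -scalemxAr mulmxBr mul_mx_scalar Cayley_Hamilton_mx2.
by rewrite opprB addrC subrK scale_scalar_mx mulVf // mulmx1.
Qed.

Lemma mxtrace_invmx2 A : A \in unitmx -> \tr (invmx A) = (\det A)^-1 * \tr A.
Proof.
move=> Au; rewrite invmx_mx2 // mxtraceZ [\tr (_ - _)]mxtrace_mx2 !mxE /= mxtrace_mx2.
by congr (_ * _); ring.
Qed.

Lemma mx2_reversor_sqr1_or_det1 M G :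
  G \in unitmx -> M *m G *m M = G -> M *m M = 1%:M \/ \det M = 1.
Proof.
move=> Gu rev.
have detM2 : \det M * \det M = 1.
  have detG_neq0 : \det G != 0 by rewrite -unitfE -unitmxE.
  by apply: (mulIf detG_neq0); rewrite mul1r -[in RHS]rev !det_mulmx; ring.
have detM_neq0 : \det M != 0.
  by apply/eqP=> detM0; move: detM2; rewrite detM0 mul0r => /eqP; rewrite eq_sym oner_eq0.
have Mu : M \in unitmx by rewrite unitmxE unitfE.
(* G^-1 M G = M^-1, and conjugate matrices have the same trace. *)
have trV : \tr (invmx M) = \tr M.
  have MG : M *m G = G *m invmx M by rewrite -{2}rev mulmxK.
  by rewrite -[invmx M](mulKmx Gu) mxtrace_mulC -MG mulmxK.
have trM : \tr M = \det M * \tr M.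
  by rewrite -{1}trV mxtrace_invmx2 // -[(\det M)^-1]mul1r -detM2 mulfK.
have [-> | detM_neq1] := eqVneq (\det M) 1; [by right | left].
have detM_opp1 : \det M = -1.
  move: detM2; rewrite -expr2 => /eqP; rewrite sqrf_eq1 => /orP[/eqP detM1 | /eqP //].
  by rewrite detM1 eqxx in detM_neq1.
have trM0 : \tr M = 0.
  have : \tr M * (1 - \det M) = 0 by rewrite mulrBr mulr1 mulrC -trM subrr.
  by move/eqP; rewrite mulf_eq0 subr_eq0 [1 == _]eq_sym (negbTE detM_neq1) orbF => /eqP.
by rewrite Cayley_Hamilton_mx2 trM0 detM_opp1 scale0r sub0r raddfN opprK.
Qed.

Definition mx2 (a b c d : F) : 'M[F]_2 :=
  \matrix_(i, j) if i == i0 then (if j == i0 then a else b) else (if j == i0 then c else d).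

Definition involutory_mx_reversor M G :=
  [/\ G \in unitmx, M *m G *m M = G & G *m G = 1%:M].

Lemma involutory_mx_reversor_lower M : \det M = 1 -> M i1 i0 != 0 ->
  exists G, involutory_mx_reversor M G.
Proof.
rewrite det_mx2 => detM c_neq0.
have b_def : M i0 i1 = (M i0 i0 * M i1 i1 - 1) / M i1 i0.
  by rewrite -detM; field.
exists (mx2 1 ((M i1 i1 - M i0 i0) / M i1 i0) 0 (-1)); split.
- by rewrite unitmxE unitfE det_mx2 !mxE /= mulr0 subr0 mul1r oppr_eq0 oner_eq0.
- by apply: eq_mx2; rewrite !mulmx2E !mxE /= ?b_def; field.
- by apply: eq_mx2; rewrite !mulmx2E !mxE /=; field.
Qed.

Lemma involutory_mx_reversor_diag M : \det M = 1 -> M i0 i1 = 0 -> M i1 i0 = 0 ->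
  exists G, involutory_mx_reversor M G.
Proof.
rewrite det_mx2 => detM b0 c0; rewrite b0 c0 mulr0 subr0 in detM.
have a_neq0 : M i0 i0 != 0 by apply: contra_eq_neq detM => ->; rewrite mul0r eq_sym oner_eq0.
have d_def : M i1 i1 = (M i0 i0)^-1 by rewrite -[RHS]mulr1 -detM mulKf.
exists (mx2 0 1 1 0); split.
- by rewrite unitmxE unitfE det_mx2 !mxE /= mul0r sub0r mul1r oppr_eq0 oner_eq0.
- by apply: eq_mx2; rewrite !mulmx2E !mxE /= ?b0 ?c0 ?d_def; field.
- by apply: eq_mx2; rewrite !mulmx2E !mxE /=; ring.
Qed.

Lemma involutory_mx_reversor_tr M G :
  involutory_mx_reversor M^T G -> involutory_mx_reversor M G^T.
Proof.
case=> Gu rev G2; split; first by rewrite unitmx_tr.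
- by rewrite -{2}rev !trmx_mul trmxK mulmxA.
- by rewrite -trmx_mul G2 tr_scalar_mx.
Qed.

Lemma involutory_mx_reversor_det1 M : \det M = 1 -> exists G, involutory_mx_reversor M G.
Proof.
move=> detM; have [c0 | c_neq0] := eqVneq (M i1 i0) 0; last first.
  exact: involutory_mx_reversor_lower.
have [b0 | b_neq0] := eqVneq (M i0 i1) 0; first exact: involutory_mx_reversor_diag.
have [G revG] : exists G, involutory_mx_reversor M^T G.
  by apply: involutory_mx_reversor_lower; rewrite ?det_tr ?mxE.
by exists G^T; apply: involutory_mx_reversor_tr.
Qed.
End Matrix2.

Section GL2.
Variable F : finFieldType.

Lemma GL_reversorE n (M G : {'GL_n[F]}) :
  reversor M G <-> (GLval M *m GLval G *m GLval M = GLval G)%R.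
Proof. by rewrite reversor_mulP; split=> [/(congr1 GLval) | MGM]; last apply: val_inj. Qed.

Lemma GL_expg2E n (M : {'GL_n[F]}) : M ^+ 2 = 1 <-> (GLval M *m GLval M = 1%:M)%R.
Proof. by rewrite expg2; split=> [/(congr1 GLval) | M2]; last apply: val_inj. Qed.

Lemma GL2_involutory_reversor_det1 (M : {'GL_2[F]}) : (\det (GLval M) = 1)%R ->
  exists G : {'GL_2[F]}, reversor M G /\ G ^+ 2 = 1.
Proof.
case/involutory_mx_reversor_det1=> G [Gu rev G2].
by exists (FinRing.Unit Gu); split; [apply/GL_reversorE | apply/GL_expg2E].
Qed.

Lemma GL2_reversibleE (M : {'GL_2[F]}) :
  reversible M <-> M ^+ 2 = 1 \/ (\det (GLval M) = 1)%R.
Proof.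
split=> [[G /GL_reversorE rev] | [M2 | detM]].
- have [M2 | detM] := mx2_reversor_sqr1_or_det1 (GL_unitmx G) rev; last by right.
  by left; apply/GL_expg2E.
- by exists 1; apply/reversor_mulP; rewrite mulg1 -expg2.
- by have [G [rev _]] := GL2_involutory_reversor_det1 detM; exists G.
Qed.
End GL2.

Theorem theorem4p4 (p : nat) (p_pr : prime p) (M : {'GL_2['F_p]}) :
  (reversible M <-> (M ^+ 2 = 1 \/ (\det (GLval M) = 1)%R))
  /\ (M ^+ 2 = 1 -> revsymgrp M = symgrp M)
  /\ ((\det (GLval M) = 1)%R -> M ^+ 2 != 1 ->
      exists G : {'GL_2['F_p]},
        [/\ reversor M G, G ^+ 2 = 1, #[G] = 2%N
          & symgrp M ><| <[G]> = revsymgrp M]).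
Proof.
split; first exact: GL2_reversibleE.
split; first exact: revsymgrp_involution.
move=> detM M2; have [G [rev G2]] := GL2_involutory_reversor_det1 detM.
by exists G; split;
  [| | exact: order_involutory_reversor rev G2 M2 | exact: revsymgrp_sdprod rev G2 M2].
Qed.
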